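(* Let $D$ be an arbitrary subset of $\mathbb{Z}^d$ and $g$ a function in $\ell^1(D)$. Let $k,t$ be positive integers with $k<t$ and let $r>0$. For any $x\in\overline D$, $$P\Big(\Big\|\frac1tL^D_t-g^2\Big\|_{1,D}\le r,\ \tau<\infty\Big)\le\frac{2\,P_x\Big(\Big\|\frac1tL^D_t-g^2\Big\|_{1,D}\le r+4\frac{k}{t-k},\ \tau<\infty\Big)}{P_x(S_k=0)+P_x(S_{k-1}=0)}.$$
   Context: $P_x$ is the law of the simple random walk $(S_j)$ on $\mathbb{Z}^d$ started at $x$, $P=P_0$. $L_j(y)=\sum_{i=0}^{j-1}1_{\{S_i=y\}}$, $L_j(D)=\sum_{y\in D}L_j(y)$, $\tau=\tau(D,t)=\inf\{j\ge1:L_j(D)=t\}$, and $L^D_t(y)=L_{\tau(D,t)}(y)$ for $y\in D$. $\|f\|_{1,D}=\sum_{y\in D}|f(y)|$. $\overline D=D\cup\{x:\exists y\in D,|x-y|=1\}$. *)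

From HB Require Import structures.
From mathcomp Require Import all_boot all_order all_algebra.
From mathcomp Require Import all_classical all_reals all_analysis.
Set Implicit Arguments. Unset Strict Implicit. Unset Printing Implicit Defensive.
Import Order.TTheory GRing.Theory Num.Theory.
Local Open Scope classical_set_scope.
Local Open Scope ring_scope.

Definition Zd (d : nat) := 'rV[int]_d.

(* A step of the simple random walk: a coordinate and a sign (2d choices). *)
Definition step (d : nat) := ('I_d * bool)%type.

Definition stepv d (s : step d) : Zd d :=
  \row_i (if i == s.1 then (if s.2 then 1 else -1) else 0).

Definition walk_pos d (x : Zd d) (w : seq (step d)) (j : nat) : Zd d :=
  x + \sum_(s <- take j w) stepv s.

Definition loc_time d (x : Zd d) (w : seq (step d)) (j : nat) (y : Zd d) : nat :=
  \sum_(i < j) (walk_pos x w i == y).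

Definition loc_time_set d (x : Zd d) (w : seq (step d)) (j : nat)
  (D : set (Zd d)) : nat :=
  \sum_(i < j) (walk_pos x w i \in D).

(* tau(D,t) = n, i.e. n = inf {j >= 1 : L_j(D) = t} *)
Definition tau_is d (D : set (Zd d)) (t : nat) (x : Zd d) (w : seq (step d))
  (n : nat) : bool :=
  [&& (0 < n)%N, loc_time_set x w n D == t &
      [forall j : 'I_n, (0 < j)%N ==> (loc_time_set x w j D != t)]].

(* P_x(E, tau < oo) for an event E on L^D_t = L_tau(.):
   sum over n of the probability of the length-n cylinder paths with tau = n
   and E(L_n), each cylinder having probability (2d)^{-n}. *)
Definition stopped_prob {R : realType} d (D : set (Zd d)) (t : nat) (x : Zd d)
  (E : (Zd d -> nat) -> Prop) : \bar R :=
  (\sum_(n <oo)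
     (\sum_(w : n.-tuple (step d) | tau_is D t x w n && `[< E (loc_time x w n) >])
        ((2 * d)%:R ^- n : R))%:E)%E.

Definition hit_prob {R : realType} d (x : Zd d) (k : nat) (y : Zd d) : R :=
  \sum_(w : k.-tuple (step d) | walk_pos x w k == y) ((2 * d)%:R ^- k).

Definition l1normD (R : realType) d (D : set (Zd d)) (f : Zd d -> R) : \bar R :=
  (\esum_(y in D) (`|f y|)%:E)%E.

Definition close_ev (R : realType) d (D : set (Zd d)) (g : Zd d -> R) (t : nat)
  (r : R) (L : Zd d -> nat) : Prop :=
  (l1normD D (fun y => ((L y)%:R / t%:R - g y ^+ 2)%R) <= r%:E)%E.

Definition Dbar d (D : set (Zd d)) : set (Zd d) :=
  [set x | D x \/ exists2 y, D y & \sum_(i < d) ((x - y) ord0 i) ^+ 2 = 1].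

From HB Require Import structures.
From mathcomp Require Import all_boot all_order all_algebra.
From mathcomp Require Import all_classical all_reals all_analysis.
From mathcomp Require Import zify ring lra.
Import Order.TTheory GRing.Theory Num.Theory.
Local Open Scope classical_set_scope.
Local Open Scope ring_scope.

(* Cut a walk from [x] into a prefix [p] of length [j <= k] that ends at [0]
   and a walk [w] from [0] whose local time at its stopping time [n] is
   [r]-close to [g^2].  If [p] spends [m <= j] steps in [D], then the
   concatenation stops at [|p| + n1], where [n1 <= n] is the first time [w]
   has spent [t - m] steps in [D].  Its local time is that of [w] at [n], plus
   the [m] visits of [p], minus the [m] visits of [w] after [n1]; so the
   l1-distance to [g^2] grows by at most [2m/t <= 4k/(t-k)].  As stopping
   times along a path are unique, summing over [p] and [w] gives
   [P_x(S_j = 0) P(E, tau < oo) <= P_x(E', tau < oo)] for each [j <= k], where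
   [E'] is [E] with [r] enlarged to [r + 4k/(t-k)]; take [j = k] and
   [j = k-1]. *)

Section TupleSums.
Variables (T : finType) (V : nmodType).

Lemma big_tuple0 (F : seq T -> V) : \sum_(w : 0.-tuple T) F w = F [::].
Proof.
rewrite (eq_bigr (fun _ => F [::])); last by move=> w _; rewrite tuple0.
by rewrite sumr_const card_tuple.
Qed.

Lemma big_tupleS n (F : seq T -> V) :
  \sum_(w : n.+1.-tuple T) F w = \sum_(s : T) \sum_(w : n.-tuple T) F (s :: w).
Proof.
rewrite pair_big /= (reindex (fun p : T * n.-tuple T => [tuple of p.1 :: p.2])) //=.
exists (fun w : n.+1.-tuple T => (thead w, [tuple of behead w])).
- by move=> [s w] _ /=; congr pair; apply: val_inj.
- by move=> w _; rewrite [RHS]tuple_eta; apply: val_inj.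
Qed.

Lemma big_tuple_take n M (F : seq T -> V) : (n <= M)%N ->
  \sum_(w : M.-tuple T) F (take n w) = (\sum_(w : n.-tuple T) F w) *+ (#|T| ^ (M - n)).
Proof.
elim: n M F => [|n IHn] M F leNM.
  rewrite big_tuple0 (eq_bigr (fun _ => F [::])) => [|w _]; last by rewrite take0.
  by rewrite sumr_const card_tuple subn0.
case: M leNM => [|M] // leNM.
rewrite (big_tupleS _ (fun w => F (take n.+1 w))) big_tupleS -sumrMnl.
apply: eq_bigr => s _ /=.
by rewrite subSS -(IHn M (fun w => F (s :: w))).
Qed.

Lemma big_tuple_cat j M (F : seq T -> V) :
  \sum_(v : (j + M).-tuple T) F v = \sum_(p : j.-tuple T) \sum_(w : M.-tuple T) F (p ++ w).
Proof.
elim: j F => [|j IHj] F.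
  by rewrite (big_tuple0 (fun p => \sum_(w : M.-tuple T) F (p ++ w))).
rewrite (big_tupleS _ (fun p => \sum_(w : M.-tuple T) F (p ++ w))).
rewrite [LHS](big_tupleS (j + M)); apply: eq_bigr => s _.
exact: (IHj (fun v => F (s :: v))).
Qed.

End TupleSums.

Lemma sum_uniform_take (R : numFieldType) (T : finType) (b : pred (seq T)) n M :
  (0 < #|T|)%N -> (n <= M)%N ->
  \sum_(w : n.-tuple T | b w) (#|T|%:R ^- n : R) =
  \sum_(w : M.-tuple T) #|T|%:R ^- M * (b (take n w))%:R.
Proof.
move=> T_gt0 leNM.
have cT : (#|T|%:R : R) \is a GRing.unit by rewrite unitfE pnatr_eq0 -lt0n.
rewrite -mulr_sumr (@big_tuple_take _ _ n M (fun u => (b u)%:R : R)) //.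
rewrite -[_ *+ (_ ^ _)]mulr_natr natrX.
rewrite (exprB leNM cT) mulrCA mulKr ?unitrX // mulrC big_mkcond mulr_sumr.
by apply: eq_bigr => w _; case: (b w); rewrite ?mulr1 ?mulr0.
Qed.

Section Walk.
Context {d : nat}.
Implicit Types (x y : Zd d) (p w : seq (step d)) (D : set (Zd d)).

Lemma walk_pos_take x w n i : (i <= n)%N -> walk_pos x (take n w) i = walk_pos x w i.
Proof. by move=> le_in; rewrite /walk_pos take_takel. Qed.

Lemma walk_pos_cat x p w i : (i <= size p)%N -> walk_pos x (p ++ w) i = walk_pos x p i.
Proof. by move=> le_ip; rewrite /walk_pos takel_cat. Qed.

Lemma walk_posD x w a i : walk_pos x w (a + i) = walk_pos (walk_pos x w a) (drop a w) i.
Proof. by rewrite /walk_pos takeD big_cat addrA. Qed.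

Section WalkSums.
Variable F : Zd d -> nat.

Lemma sum_walk_pos_take x w n j : (j <= n)%N ->
  (\sum_(i < j) F (walk_pos x (take n w) i) = \sum_(i < j) F (walk_pos x w i))%N.
Proof.
move=> le_jn; apply: eq_bigr => i _.
by rewrite walk_pos_take // (leq_trans (ltnW (ltn_ord i))).
Qed.

Lemma sum_walk_pos_catl x p w j : (j <= size p)%N ->
  (\sum_(i < j) F (walk_pos x (p ++ w) i) = \sum_(i < j) F (walk_pos x p i))%N.
Proof.
move=> le_jp; apply: eq_bigr => i _.
by rewrite walk_pos_cat // (leq_trans (ltnW (ltn_ord i))).
Qed.

Lemma sum_walk_posD x w a b :
  (\sum_(i < a + b) F (walk_pos x w i) =
   \sum_(i < a) F (walk_pos x w i) +
   \sum_(i < b) F (walk_pos (walk_pos x w a) (drop a w) i))%N.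
Proof. by rewrite big_split_ord; congr addn; apply: eq_bigr => i _; rewrite walk_posD. Qed.

Lemma sum_walk_pos_cat x p w b :
  (\sum_(i < size p + b) F (walk_pos x (p ++ w) i) =
   \sum_(i < size p) F (walk_pos x p i) +
   \sum_(i < b) F (walk_pos (walk_pos x p (size p)) w i))%N.
Proof.
by rewrite sum_walk_posD sum_walk_pos_catl // drop_size_cat // walk_pos_cat.
Qed.

End WalkSums.

Lemma loc_time_take x w n y : loc_time x (take n w) n y = loc_time x w n y.
Proof. exact: (sum_walk_pos_take (fun z => (z == y) : nat) x w n n (leqnn n)). Qed.

Lemma loc_timeD x w a b y :
  loc_time x w (a + b) y = (loc_time x w a y + loc_time (walk_pos x w a) (drop a w) b y)%N.
Proof. exact: (sum_walk_posD (fun z => (z == y) : nat)). Qed.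

Lemma loc_time_cat x p w b y :
  loc_time x (p ++ w) (size p + b) y =
  (loc_time x p (size p) y + loc_time (walk_pos x p (size p)) w b y)%N.
Proof. exact: (sum_walk_pos_cat (fun z => (z == y) : nat)). Qed.

Lemma loc_time_set_take x w n j D : (j <= n)%N ->
  loc_time_set x (take n w) j D = loc_time_set x w j D.
Proof. exact: (sum_walk_pos_take (fun z => (z \in D) : nat)). Qed.

Lemma loc_time_set_catl x p w j D : (j <= size p)%N ->
  loc_time_set x (p ++ w) j D = loc_time_set x p j D.
Proof. exact: (sum_walk_pos_catl (fun z => (z \in D) : nat)). Qed.

Lemma loc_time_setD x w a b D :
  loc_time_set x w (a + b) D =
  (loc_time_set x w a D + loc_time_set (walk_pos x w a) (drop a w) b D)%N.
Proof. exact: (sum_walk_posD (fun z => (z \in D) : nat)). Qed.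

Lemma loc_time_set_cat x p w b D :
  loc_time_set x (p ++ w) (size p + b) D =
  (loc_time_set x p (size p) D + loc_time_set (walk_pos x p (size p)) w b D)%N.
Proof. exact: (sum_walk_pos_cat (fun z => (z \in D) : nat)). Qed.

Lemma loc_time_set0 x w D : loc_time_set x w 0 D = 0%N.
Proof. exact: big_ord0. Qed.

Lemma loc_time_setS x w i D : (loc_time_set x w i.+1 D <= (loc_time_set x w i D).+1)%N.
Proof. by rewrite /loc_time_set big_ord_recr /= -addn1 leq_add2l leq_b1. Qed.

Lemma loc_time_set_le x w i D : (loc_time_set x w i D <= i)%N.
Proof.
rewrite -[X in (_ <= X)%N]card_ord -sum1_card.
by apply: leq_sum => j _; apply: leq_b1.
Qed.

Lemma loc_time_set_mono x w i j D : (i <= j)%N ->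
  (loc_time_set x w i D <= loc_time_set x w j D)%N.
Proof. by move=> le_ij; rewrite -(subnKC le_ij) loc_time_setD leq_addr. Qed.

Lemma tau_is_take D t x w n : tau_is D t x (take n w) n = tau_is D t x w n.
Proof.
rewrite /tau_is loc_time_set_take //; congr [&& _, _ & _].
by apply: eq_forallb => j; rewrite loc_time_set_take // ltnW.
Qed.

Lemma tau_is_uniq D t x w n1 n2 : tau_is D t x w n1 -> tau_is D t x w n2 -> n1 = n2.
Proof.
move=> /and3P[n1_gt0 /eqP L1 /forallP first1] /and3P[n2_gt0 /eqP L2 /forallP first2].
case: (ltngtP n1 n2) => // lt_n.
- by have := first2 (Ordinal lt_n); rewrite n1_gt0 L1 eqxx.
- by have := first1 (Ordinal lt_n); rewrite n2_gt0 L2 eqxx.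
Qed.

Lemma tau_is_first D t s y w n : (0 < s <= t)%N ->
  tau_is D t y w n -> exists2 n1, (n1 <= n)%N & tau_is D s y w n1.
Proof.
move=> /andP[s_gt0 le_st] /and3P[_ /eqP Ln _].
pose f i := loc_time_set y w i D.
have exP : exists i, (s <= f i)%N by exists n; rewrite /f Ln.
case: (ex_minnP exP) => n1 le_s_fn1 min_n1.
have n1_gt0 : (0 < n1)%N.
  by case: n1 le_s_fn1 {min_n1} => [|//]; rewrite /f loc_time_set0 leqNgt s_gt0.
have below j : (j < n1)%N -> (f j < s)%N.
  by move=> lt_j; rewrite ltnNge; apply: contraL lt_j => /min_n1; rewrite -leqNgt.
exists n1; first by apply: min_n1; rewrite /f Ln.
apply/and3P; split => //.
- have := loc_time_setS y w n1.-1 D; rewrite prednK // => le_fS.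
  by have := below n1.-1; rewrite /f in le_fS le_s_fn1 *; lia.
- apply/forallP => j; apply/implyP => _.
  by rewrite neq_ltn below.
Qed.

Lemma tau_is_cat D t m x p w n :
  loc_time_set x p (size p) D = m -> (m < t)%N ->
  tau_is D (t - m) (walk_pos x p (size p)) w n -> tau_is D t x (p ++ w) (size p + n).
Proof.
move=> Lp lt_mt /and3P[n_gt0 /eqP Lw /forallP first]; apply/and3P; split.
- by rewrite addn_gt0 n_gt0 orbT.
- by rewrite loc_time_set_cat Lp Lw subnKC // ltnW.
- apply/forallP => -[j lt_j] /=; apply/implyP => j_gt0.
  have [le_jp | lt_pj] := leqP j (size p).
    rewrite loc_time_set_catl //; apply: contraTneq lt_mt => L_t.
    by rewrite -leqNgt -L_t -Lp loc_time_set_mono.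
  have lt_i : (j - size p < n)%N by lia.
  rewrite -(subnKC (ltnW lt_pj)) loc_time_set_cat Lp.
  by have := first (Ordinal lt_i); rewrite /= subn_gt0 lt_pj /=; lia.
Qed.

Definition stops_at D t x (E : (Zd d -> nat) -> Prop) n w : bool :=
  tau_is D t x w n && `[< E (loc_time x w n) >].

Lemma stops_at_take D t x E n w : stops_at D t x E n (take n w) = stops_at D t x E n w.
Proof.
rewrite /stops_at tau_is_take (_ : loc_time x (take n w) n = loc_time x w n) //.
by apply/funext => y; apply: loc_time_take.
Qed.

Lemma stops_at_uniq D t x E n1 n2 w :
  stops_at D t x E n1 w -> stops_at D t x E n2 w -> n1 = n2.
Proof. by move=> /andP[tau1 _] /andP[tau2 _]; apply: tau_is_uniq tau1 tau2. Qed.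

End Walk.

Section Closeness.
Variables (R : realType) (d : nat).
Implicit Types (x y : Zd d) (D : set (Zd d)) (g : Zd d -> R).

Lemma esum_indicator_le D (z : Zd d) (c : R) : 0 <= c ->
  (\esum_(y in D) (((z == y) : nat)%:R / c)%:E <= (((z \in D) : nat)%:R / c)%:E)%E.
Proof.
move=> c_ge0; have [zD | zDN] := boolP (z \in D); last first.
  rewrite esum1 ?mul0r // => y Dy.
  have /negPf-> : z != y by apply: contraNneq zDN => ->; rewrite inE.
  by rewrite mul0r.
rewrite (esumID [set z]) => [|y _]; last by rewrite lee_fin divr_ge0.
have -> : D `&` [set z] = [set z].
  by apply/seteqP; split => y /= => [[]//|->]; split=> //; rewrite -inE.
rewrite esum_set1; last by rewrite lee_fin divr_ge0.
rewrite esum1 ?adde0 ?eqxx // => y [_ /= yz].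
have /negPf-> : z != y by apply/eqP => zy; apply: yz.
by rewrite mul0r.
Qed.

Lemma esum_loc_time_le D x w n (c : R) : 0 <= c ->
  (\esum_(y in D) ((loc_time x w n y)%:R / c)%:E <=
   ((loc_time_set x w n D)%:R / c)%:E)%E.
Proof.
move=> c_ge0.
rewrite (eq_esum (b := fun y => \sum_(i < n) (((walk_pos x w i == y) : nat)%:R / c)%:E));
  last by move=> y _; rewrite natr_sum mulr_suml sumEFin.
rewrite esum_sum => [|y i _ _]; last by rewrite lee_fin divr_ge0.
by rewrite natr_sum mulr_suml -sumEFin; apply: lee_sum => i _; apply: esum_indicator_le.
Qed.

Lemma close_ev_perturb D g t (r r' a b : R) (L L' A B C : Zd d -> nat) :
  (forall y, L' y = A y + C y)%N -> (forall y, L y = C y + B y)%N ->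
  (\esum_(y in D) ((A y)%:R / t%:R)%:E <= a%:E)%E ->
  (\esum_(y in D) ((B y)%:R / t%:R)%:E <= b%:E)%E ->
  r + a + b <= r' ->
  close_ev D g t r L -> close_ev D g t r' L'.
Proof.
move=> L'E LE massA massB le_r close_L; rewrite /close_ev /l1normD.
apply: (@le_trans _ _ (\esum_(y in D) (`|(L y)%:R / t%:R - g y ^+ 2|%:E
   + ((A y)%:R / t%:R)%:E + ((B y)%:R / t%:R)%:E))%E).
  apply: le_esum => y _; rewrite -!EFinD lee_fin L'E LE !natrD !mulrDl.
  set sA := (A y)%:R / t%:R; set sB := (B y)%:R / t%:R.
  set sC := (C y)%:R / t%:R; set v := g y ^+ 2.
  have [sA_ge0 sB_ge0] : 0 <= sA /\ 0 <= sB by split; apply: divr_ge0.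
  have h1 : `|sA + sC - v| <= sA + `|sC - v|.
    by rewrite -addrA -[X in _ <= X + _](ger0_norm sA_ge0) ler_normD.
  have h2 : `|sC - v| <= `|sC + sB - v| + sB.
    have := ler_normD (sC + sB - v) (- sB).
    have -> : sC + sB - v + - sB = sC - v by ring.
    by rewrite normrN (ger0_norm sB_ge0).
  lra.
have frac_ge0 (F : Zd d -> nat) y : (0 <= ((F y)%:R / t%:R)%:E :> \bar R)%E.
  by rewrite lee_fin divr_ge0.
rewrite esumD => [|y _|y _] //; last by rewrite adde_ge0.
rewrite esumD => [|y _|y _] //.
apply: le_trans (_ : (r + a + b)%:E <= r'%:E)%E; last by rewrite lee_fin.
by rewrite !EFinD; apply: leeD => //; apply: leeD.
Qed.

Lemma twice_ratio_le (m k t : nat) : (m <= k)%N -> (k < t)%N ->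
  m%:R / t%:R + m%:R / t%:R <= 4 * (k%:R / (t - k)%N%:R) :> R.
Proof.
move=> le_mk lt_kt.
have t_gt0 : 0 < t%:R :> R by rewrite ltr0n; lia.
have tk_gt0 : 0 < (t - k)%N%:R :> R by rewrite ltr0n subn_gt0.
have le_tk : (t - k)%N%:R <= t%:R :> R by rewrite ler_nat leq_subr.
have le_mk' : m%:R <= k%:R :> R by rewrite ler_nat.
have h1 : m%:R / t%:R <= k%:R / t%:R :> R by rewrite ler_wpM2r // invr_ge0 ltW.
have h2 : k%:R / t%:R <= k%:R / (t - k)%N%:R :> R.
  by rewrite ler_wpM2l ?ler0n // lef_pV2 ?posrE.
have : 0 <= k%:R / (t - k)%N%:R :> R by rewrite divr_ge0 ?ler0n // ltW.
lra.
Qed.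

Lemma stops_at_close_cat D g t k r x y p w n :
  (size p <= k)%N -> (k < t)%N -> walk_pos x p (size p) = y ->
  stops_at D t y (close_ev D g t r) n w ->
  exists2 n', (n' <= size p + n)%N &
    stops_at D t x (close_ev D g t (r + 4 * (k%:R / (t - k)%N%:R))) n' (p ++ w).
Proof.
move=> le_pk lt_kt Sp /andP[tau_n /asboolP close_n].
set m := loc_time_set x p (size p) D.
have le_mk : (m <= k)%N := leq_trans (loc_time_set_le _ _ _ _) le_pk.
have [|n1 le_n1n tau_n1] := @tau_is_first _ D t (t - m) y w n _ tau_n; first lia.
exists (size p + n1); first by rewrite leq_add2l.
apply/andP; split; first by apply: (@tau_is_cat _ D t m); rewrite ?Sp //; lia.
have mass_rest : loc_time_set (walk_pos y w n1) (drop n1 w) (n - n1) D = m.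
  move: tau_n tau_n1 => /and3P[_ /eqP Ln _] /and3P[_ /eqP Ln1 _].
  by have := loc_time_setD y w n1 (n - n1) D; rewrite subnKC // Ln Ln1; lia.
apply/asboolP/(@close_ev_perturb D g t r _ (m%:R / t%:R) (m%:R / t%:R) _ _
  (loc_time x p (size p)) (loc_time (walk_pos y w n1) (drop n1 w) (n - n1))
  (loc_time y w n1) _ _ _ _ _ close_n).
- by move=> z; rewrite loc_time_cat Sp.
- by move=> z; rewrite -loc_timeD subnKC.
- exact: esum_loc_time_le.
- by rewrite -mass_rest; apply: esum_loc_time_le.
- by rewrite -addrA lerD2l twice_ratio_le.
Qed.

End Closeness.

Lemma sum_bool_le (R : numDomainType) (I J : finType) (P : pred I) (Q : pred J) :
  (forall i1 i2, P i1 -> P i2 -> i1 = i2) -> (forall i, P i -> exists j, Q j) ->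
  \sum_i (P i)%:R <= \sum_j (Q j)%:R :> R.
Proof.
move=> P_uniq PQ; have [i Pi | P0] := pickP P; last first.
  by rewrite big1 ?sumr_ge0 // => i _; rewrite P0.
have [j Qj] := PQ i Pi.
rewrite (bigD1 i) //= Pi big1 ?addr0 => [|i' ne_i'i]; last first.
  by case: (boolP (P i')) => // Pi'; rewrite (P_uniq _ _ Pi' Pi) eqxx in ne_i'i.
by rewrite (bigD1 j) //= Qj lerDl sumr_ge0.
Qed.

Section StoppedProb.
Variables (R : realType) (d : nat).
Hypothesis d_gt0 : (0 < d)%N.
Implicit Types (x y : Zd d) (D : set (Zd d)) (E : (Zd d -> nat) -> Prop).

Definition stopped_prob_n D t x E n : R :=
  \sum_(w : n.-tuple (step d) | stops_at D t x E n w) (2 * d)%:R ^- n.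

Lemma stopped_probE D t x E :
  stopped_prob D t x E = (\sum_(n <oo) (stopped_prob_n D t x E n)%:E)%E.
Proof. by []. Qed.

Lemma stopped_prob_n_ge0 D t x E n : 0 <= stopped_prob_n D t x E n.
Proof. by apply: sumr_ge0 => w _; rewrite invr_ge0 exprn_ge0. Qed.

Lemma hit_prob_ge0 x j y : 0 <= hit_prob (R := R) x j y.
Proof. by apply: sumr_ge0 => w _; rewrite invr_ge0 exprn_ge0. Qed.

Lemma card_step : #|{: step d}| = (2 * d)%N.
Proof. by rewrite card_prod card_ord card_bool mulnC. Qed.

Lemma sum_stopped_prob_n D t x E N :
  \sum_(n < N) stopped_prob_n D t x E n =
  \sum_(w : N.-tuple (step d))
    (2 * d)%:R ^- N * \sum_(n < N) (stops_at D t x E n (take n w))%:R.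
Proof.
have T_gt0 : (0 < #|{: step d}|)%N by rewrite card_step muln_gt0.
under eq_bigr => n _ do rewrite /stopped_prob_n -card_step
  (@sum_uniform_take R _ (stops_at D t x E n) n N T_gt0 (ltnW (ltn_ord n))).
by rewrite exchange_big card_step; apply: eq_bigr => w _; rewrite mulr_sumr.
Qed.

Lemma hit_probE x j y :
  hit_prob (R := R) x j y =
  \sum_(p : j.-tuple (step d)) (2 * d)%:R ^- j * (walk_pos x p j == y)%:R.
Proof.
rewrite /hit_prob big_mkcond; apply: eq_bigr => p _.
by case: eqP; rewrite ?mulr1 ?mulr0.
Qed.

Section Concatenation.
Variables (D : set (Zd d)) (t j : nat) (x y : Zd d) (E E' : (Zd d -> nat) -> Prop).
Hypothesis stops_at_cat : forall (p : j.-tuple (step d)) w n,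
  walk_pos x p j = y -> stops_at D t y E n w ->
  exists2 n', (n' <= j + n)%N & stops_at D t x E' n' (p ++ w).

Lemma sum_stops_at_cat_le N (p : j.-tuple (step d)) (w : N.-tuple (step d)) :
  walk_pos x p j = y ->
  \sum_(n < N) (stops_at D t y E n (take n w))%:R <=
  \sum_(n < j + N) (stops_at D t x E' n (take n (p ++ w)))%:R :> R.
Proof.
move=> Sp; apply: sum_bool_le => [n1 n2|n]; rewrite !stops_at_take.
  by move=> s1 s2; apply: val_inj; apply: stops_at_uniq s1 s2.
move=> /(stops_at_cat p w n Sp)[n' le_n' s'].
have lt_n' : (n' < j + N)%N by apply: leq_ltn_trans le_n' _; rewrite ltn_add2l.
by exists (Ordinal lt_n'); rewrite /= stops_at_take.
Qed.

Lemma sum_stopped_prob_n_hit_le N :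
  hit_prob (R := R) x j y * \sum_(n < N) stopped_prob_n D t y E n <=
  \sum_(n < j + N) stopped_prob_n D t x E' n.
Proof.
rewrite !sum_stopped_prob_n hit_probE mulr_suml.
rewrite (@big_tuple_cat _ _ j N (fun v => (2 * d)%:R ^- (j + N) *
  \sum_(n < j + N) (stops_at D t x E' n (take n v))%:R)).
apply: ler_sum => p _; rewrite mulr_sumr; apply: ler_sum => w _.
rewrite mulrACA exprD invfM; apply: ler_wpM2l.
  by rewrite mulr_ge0 // invr_ge0 exprn_ge0.
case: eqP => [Sp|_]; last by rewrite mul0r sumr_ge0.
by rewrite mul1r sum_stops_at_cat_le.
Qed.

Lemma stopped_prob_hit_le :
  (stopped_prob D t y E * (hit_prob (R := R) x j y)%:E <= stopped_prob D t x E')%E.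
Proof.
rewrite muleC !stopped_probE -nneseriesZl => [|n _]; last first.
  by rewrite lee_fin stopped_prob_n_ge0.
apply: lime_le.
  apply: is_cvg_nneseries => n _ _.
  by rewrite mule_ge0 ?lee_fin ?hit_prob_ge0 ?stopped_prob_n_ge0.
apply: nearW => N; rewrite big_mkord.
under eq_bigr do rewrite -EFinM.
rewrite sumEFin -mulr_sumr.
apply: le_trans (nneseries_lim_ge (j + N) _) => [|n _ _]; last first.
  by rewrite lee_fin stopped_prob_n_ge0.
by rewrite big_mkord sumEFin lee_fin sum_stopped_prob_n_hit_le.
Qed.

End Concatenation.
End StoppedProb.

Theorem proposition3p7 (R : realType) (d : nat) (D : set (Zd d)) (g : Zd d -> R)
  (k t : nat) (r : R) (x : Zd d) :
  (0 < d)%N ->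
  (l1normD D g < +oo)%E ->
  (0 < k)%N -> (k < t)%N -> 0 < r ->
  Dbar D x ->
  (stopped_prob D t (0%R : Zd d) (close_ev D g t r)
     * (hit_prob (R:=R) x k (0%R : Zd d) + hit_prob (R:=R) x k.-1 (0%R : Zd d))%R%:E
   <= 2%:E * stopped_prob D t x (close_ev D g t (r + 4 * (k%:R / (t - k)%N%:R))%R))%E.
Proof.
(* Each of the two hitting terms is bounded separately. *)
move=> d_gt0 _ _ lt_kt _ _.
have prefix_cat j : (j <= k)%N -> forall (p : j.-tuple (step d)) w n,
    walk_pos x p j = 0 -> stops_at D t 0 (close_ev D g t r) n w ->
    exists2 n', (n' <= j + n)%N &
      stops_at D t x (close_ev D g t (r + 4 * (k%:R / (t - k)%N%:R))) n' (p ++ w).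
  move=> le_jk p w n Sp.
  by have := @stops_at_close_cat R d D g t k r x 0 p w n; rewrite size_tuple; apply.
rewrite EFinD ge0_muleDr ?lee_fin ?hit_prob_ge0 // mule_natl mule2n.
by apply: leeD; apply: stopped_prob_hit_le => //; apply: prefix_cat; rewrite ?leq_pred.
Qed.
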